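(* Let $p,q$ be distinct primes and $n\geqslant m\geqslant2$ with $n+m$ even. Then there exists a set of non-identity arrows of $C_{p^nq^m}$ which is a minimal generating set of the transfer system it generates and whose cardinality is $|R_{(n+m)/2}|+2$.
   Context: For a finite group $G$, an arrow is a pair $(H,K)$ of subgroups with $H\leqslant K$; identity arrows are those with $H=K$. A $G$-transfer system is a set of arrows containing all identities and closed under composition ($(H,K),(K,L)\Rightarrow(H,L)$), conjugation ($(H,K)\Rightarrow(gHg^{-1},gKg^{-1})$) and restriction ($(H,K)$ and $L\leqslant K\Rightarrow(H\cap L,L)$). For a set $S$ of non-identity arrows, $\langle S\rangle$ is the smallest transfer system containing $S$; $S$ is a minimal generating set of $\langle S\rangle$ if $\langle S\setminus\{s\}\rangle\neq\langle S\rangle$ for all $s\in S$. In $C_{p^nq^m}$ let $C_{p^aq^x}$ be the unique subgroup of order $p^aq^x$, and write $(a,x;b,y)$ for the arrow $(C_{p^aq^x},C_{p^bq^y})$ with $a\leqslant b$, $x\leqslant y$. Its midpoint is $(a+x+b+y)/2$. For a half-integer or integer $M$, $R_M$ is the set of all non-identity arrows of $C_{p^nq^m}$ with midpoint $M$. *)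

From mathcomp Require Import all_boot all_fingroup all_solvable.
Set Implicit Arguments. Unset Strict Implicit. Unset Printing Implicit Defensive.
Local Open Scope group_scope.

Section TransferSystems.
Variable gT : finGroupType.

Definition arrow_t := ({group gT} * {group gT})%type.

Definition is_arrow (G : {group gT}) (A : arrow_t) : bool :=
  (A.1 \subset A.2) && (A.2 \subset G).

Definition nonid_arrows (G : {group gT}) : {set arrow_t} :=
  [set A : arrow_t | is_arrow G A && (A.1 != A.2)].

Definition is_transfer_system (G : {group gT}) (T : {set arrow_t}) : bool :=
  [&& [forall A in T, is_arrow G A],
      [forall H : {group gT}, (H \subset G) ==> ((H, H) \in T)],
      [forall H : {group gT}, forall K : {group gT}, forall L : {group gT},
          ((H, K) \in T) && ((K, L) \in T) ==> ((H, L) \in T)],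
      [forall g in G, forall A in T, ((A.1 :^ g)%G, (A.2 :^ g)%G) \in T] &
      [forall A in T, forall L : {group gT},
          (L \subset A.2) ==> (((A.1 :&: L)%G, L) \in T)]].

Definition gen_ts (G : {group gT}) (S : {set arrow_t}) : {set arrow_t} :=
  \bigcap_(T : {set arrow_t} | is_transfer_system G T && (S \subset T)) T.

Definition minimal_gen (G : {group gT}) (S : {set arrow_t}) : Prop :=
  forall s, s \in S -> gen_ts G (S :\ s) != gen_ts G S.

(* For G cyclic of order p^n q^m, the subgroup C_{p^a q^x} has order p^a q^x,
   so a = logn p #|H|, x = logn q #|H|.  Rmid2 G p q k is the set of non-identity
   arrows (a,x;b,y) with a+x+b+y = k, i.e. with midpoint k/2; thus R_M is
   Rmid2 G p q (2*M). *)
Definition Rmid2 (G : {group gT}) (p q k : nat) : {set arrow_t} :=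
  [set A in nonid_arrows G |
    logn p #|A.1| + logn q #|A.1| + logn p #|A.2| + logn q #|A.2| == k].

End TransferSystems.

(* Subgroups of the cyclic group G of order p^n q^m are determined by their coordinates
   (logn p #|H|, logn q #|H|), which identify the subgroup lattice with [0,n] x [0,m]
   ordered componentwise, intersection being the componentwise minimum; the rank sum
   a + x + b + y of an arrow (a,x;b,y) is twice its midpoint.  Write n = m + 2a, so that
   the midpoint in question is M = m + a.  The set S consists of the arrows of midpoint M
   other than (M-1,0;M+1,0), together with the arrows (a,m;a+1,m), (M,0;M,1) and
   (M,0;M+1,0) of midpoint M + 1/2.  For a > 0 this removes one arrow of R_M and adds three;
   for a = 0 neither (M-1,0;M+1,0) nor (M,0;M+1,0) exists and two arrows are added.

   For minimality we exhibit, for each s = (X,Y) in S, a transfer system containing S \ s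
   but not s.  If X is a maximal subgroup of some V with (V,Y) in S \ s of midpoint M + 1/2,
   take the arrows that do not restrict to (X,V): since no subgroup lies strictly between
   X and V, such a restriction never arises from a composite of arrows avoiding it, and a
   coordinate computation shows that s is the only arrow of S restricting to (X,V).
   Otherwise take the arrows of rank sum below 2M, the arrows of S \ s, and the composites
   of a cover with an arrow of S \ s of rank sum 2M + 1: all arrows of S of rank sum 2M + 1
   are covers, which makes this set closed under composition and restriction, while s has
   rank sum at least 2M and is not such a composite. *)

From mathcomp Require Import all_boot all_fingroup all_solvable.
From mathcomp Require Import zify.
Set Implicit Arguments. Unset Strict Implicit. Unset Printing Implicit Defensive.

Lemma comp_weight h k l W : h < k -> k + l = W.+1 -> h + l < W \/ h + l = W /\ k = h.+1.
Proof. lia. Qed.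

Lemma restr_weight x h l k W : x <= h -> x < l -> l < k ->
  h + k <= W \/ h + k = W.+1 /\ k = h.+1 -> x + l < W.
Proof. lia. Qed.

Section TransferSystems.
Variables (gT : finGroupType) (G : {group gT}).
Implicit Types (S T : {set arrow_t gT}) (H K L : {group gT}).

Lemma nonid_arrow A : A \in nonid_arrows G -> is_arrow G A.
Proof. by rewrite inE => /andP[]. Qed.

Lemma gen_ts_min S T : is_transfer_system G T -> S \subset T -> gen_ts G S \subset T.
Proof. by move=> tsT sST; apply: bigcap_inf; rewrite tsT sST. Qed.

Lemma sub_gen_ts S : S \subset gen_ts G S.
Proof. by apply/bigcapsP => T /andP[]. Qed.

Lemma gen_ts_setD1_neq S T s :
  s \in S -> is_transfer_system G T -> S :\ s \subset T -> s \notin T ->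
  gen_ts G (S :\ s) != gen_ts G S.
Proof.
move=> Ss tsT sST; apply: contra => /eqP genE.
by apply: (subsetP (gen_ts_min tsT sST)); rewrite genE (subsetP (sub_gen_ts S)).
Qed.

Lemma abelian_transfer_system T : abelian G ->
  (forall A, A \in T -> is_arrow G A) ->
  (forall H, H \subset G -> (H, H) \in T) ->
  (forall H K L, (H, K) \in T -> (K, L) \in T -> (H, L) \in T) ->
  (forall H K L, (H, K) \in T -> L \subset K -> ((H :&: L)%G, L) \in T) ->
  is_transfer_system G T.
Proof.
move=> abG arrT idT compT resT; apply/and5P; split.
- exact/forall_inP.
- by apply/forallP => H; apply/implyP; apply: idT.
- by do 3!apply/forallP => ?; apply/implyP => /andP[]; apply: compT.
- apply/forall_inP => g Gg; apply/forall_inP => -[H K] HKT /=.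
  have /andP[sHK sKG] := arrT _ HKT.
  have conj_id (U : {group gT}) : U \subset G -> (U :^ g)%G = U.
    by move=> sUG; apply: val_inj; apply: (normsP (sub_abelian_norm abG sUG)).
  by rewrite !conj_id // (subset_trans sHK).
- by apply/forall_inP => -[H K] HKT; apply/forallP => L; apply/implyP; apply: resT.
Qed.

Definition restricts_to (B1 B2 : {set gT}) (A : arrow_t gT) :=
  (B2 \subset A.2) && (A.1 :&: B2 == B1).

Definition avoiding_ts (B1 B2 : {set gT}) : {set arrow_t gT} :=
  [set A | is_arrow G A && ((A.1 == A.2) || ~~ restricts_to B1 B2 A)].

Lemma avoiding_ts_is_ts (B1 B2 : {group gT}) : abelian G -> maximal_eq B1 B2 ->
  is_transfer_system G (avoiding_ts B1 B2).
Proof.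
move=> abG /maximal_eqP[_ maxB]; apply: abelian_transfer_system => //.
- by move=> A; rewrite inE => /andP[].
- by move=> H sHG; rewrite inE /is_arrow subxx sHG eqxx.
- move=> H K L; rewrite !inE /is_arrow /=.
  move=> /andP[/andP[sHK _] HK] /andP[/andP[sKL sLG] KL].
  rewrite (subset_trans sHK sKL) sLG /=.
  case: (eqVneq H K) HK => [-> // | _ /= nHK].
  case: (eqVneq K L) KL => [<- _ | _ /= nKL]; first by rewrite nHK orbT.
  apply/orP; right; apply/negP => /andP[/= sB2L /eqP /= HB2].
  have sB1K : B1 \subset K :&: B2 by rewrite -HB2 setSI.
  case: (maxB (K :&: B2)%G sB1K (subsetIr K B2)) => /= KB2.
    by case/negP: nKL; rewrite /restricts_to sB2L KB2 eqxx.
  have sB2K : B2 \subset K by rewrite -KB2 subsetIl.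
  by case/negP: nHK; rewrite /restricts_to /= sB2K HB2 eqxx.
- move=> H K L; rewrite !inE /is_arrow /= => /andP[/andP[sHK sKG] HK] sLK.
  rewrite subsetIr (subset_trans sLK sKG) /=.
  case: (boolP (restricts_to B1 B2 _)) => [/andP[/= sB2L /eqP HLB2] | _]; last by rewrite orbT.
  have HKr : restricts_to B1 B2 (H, K).
    by rewrite /restricts_to /= (subset_trans sB2L sLK) -HLB2 -setIA (setIidPr sB2L) eqxx.
  move: HK; rewrite HKr /= orbF => /eqP eHK.
  by rewrite eHK -val_eqE /= (setIidPr sLK) eqxx.
Qed.

Section Truncation.
Variables (rk : {set gT} -> nat) (W : nat) (S0 : {set arrow_t gT}).
Hypothesis rk_lt : forall H K, H \subset K -> K \subset G -> H != K -> rk H < rk K.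
Hypothesis S0_arrow : forall A, A \in S0 -> is_arrow G A.
Hypothesis S0_light : forall A, A \in S0 ->
  rk A.1 + rk A.2 <= W \/ rk A.1 + rk A.2 = W.+1 /\ rk A.2 = (rk A.1).+1.

Definition weight (A : arrow_t gT) := rk A.1 + rk A.2.

Definition cover_factor (A : arrow_t gT) :=
  [exists V : {group gT}, [&& A.1 \subset V, rk V == (rk A.1).+1 & (V, A.2) \in S0]].

Definition trunc_ts : {set arrow_t gT} :=
  [set A | is_arrow G A && [|| A.1 == A.2, weight A < W, A \in S0 |
                               (weight A == W) && cover_factor A]].

Lemma rk_le H K : H \subset K -> K \subset G -> rk H <= rk K.
Proof. by move=> sHK sKG; case: (eqVneq H K) => [-> // | nHK]; exact/ltnW/rk_lt. Qed.

Lemma S0_sub_trunc_ts : S0 \subset trunc_ts.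
Proof. by apply/subsetP => A S0A; rewrite inE S0_arrow // S0A !orbT. Qed.

Lemma trunc_ts_weight A : A \in trunc_ts -> A.1 != A.2 ->
  weight A <= W \/ [/\ A \in S0, weight A = W.+1 & rk A.2 = (rk A.1).+1].
Proof.
rewrite inE => /andP[_ TA] nA; rewrite (negbTE nA) /= in TA.
case/or3P: TA => [/ltnW | S0A | /andP[/eqP -> _]]; [by left | | by left].
by case: (S0_light S0A) => [| []]; [left | right].
Qed.

Lemma trunc_ts_is_ts : abelian G -> is_transfer_system G trunc_ts.
Proof.
move=> abG; apply: abelian_transfer_system => //.
- by move=> A; rewrite inE => /andP[].
- by move=> H sHG; rewrite inE /is_arrow subxx sHG eqxx.
- move=> H K L HKT KLT.
  case: (eqVneq H K) => [-> // | nHK]; case: (eqVneq K L) => [<- // | nKL].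
  move: (HKT) (KLT); rewrite !inE /is_arrow /=.
  move=> /andP[/andP[sHK sKG] _] /andP[/andP[sKL sLG] _].
  rewrite (subset_trans sHK sKL) sLG /=.
  have rHK := rk_lt sHK sKG nHK.
  case: (trunc_ts_weight KLT nKL) => [wKL | [S0KL wKL _]]; rewrite /weight /= in wKL *.
    by rewrite (leq_trans _ wKL) ?orbT // ltn_add2r.
  case: (comp_weight rHK wKL) => [-> | [-> rKH]]; first by rewrite orbT.
  suff -> : cover_factor (H, L) by rewrite eqxx /= !orbT.
  by apply/existsP; exists K; rewrite /= sHK rKH eqxx S0KL.
- move=> H K L HKT sLK; have := HKT; rewrite inE => /andP[/andP[sHK sKG] _].
  case: (eqVneq L K) sLK => [-> _ | nLK sLK].
    by rewrite (_ : (H :&: K)%G = H) //; apply: val_inj; apply/setIidPl.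
  rewrite inE /is_arrow /= subsetIr (subset_trans sLK sKG) /=.
  case: (eqVneq (H :&: L)%G L) => //= nHL_L.
  have nHK : H != K.
    by apply: contra_neq nHL_L => eHK; apply: val_inj; rewrite /= eHK; apply/setIidPr.
  have sLG := subset_trans sLK sKG.
  have rHL_L := rk_lt (subsetIr H L) sLG nHL_L.
  have rHL_H := rk_le (subsetIl H L) (subset_trans sHK sKG).
  have rLK := rk_lt sLK sKG nLK.
  have wHK : rk H + rk K <= W \/ rk H + rk K = W.+1 /\ rk K = (rk H).+1.
    by case: (trunc_ts_weight HKT nHK) => [w | [_ w r]]; [left | right].
  by rewrite /weight /= (restr_weight rHL_H rHL_L rLK wHK).
Qed.

End Truncation.
End TransferSystems.

Definition mgs_coords (m a h1 h2 k1 k2 : nat) : bool :=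
  [|| (h1, h2, k1, k2) == (a, m, a + 1, m),
      (h1, h2, k1, k2) == (m + a, 0, m + a, 1),
      (h1, h2, k1, k2) == (m + a, 0, m + a + 1, 0) |
      ((h1, h2, k1, k2) != (m + a - 1, 0, m + a + 1, 0)) &&
        (h1 + h2 + (k1 + k2) == 2 * (m + a))].

Lemma mgs_coordsP m a h1 h2 k1 k2 : mgs_coords m a h1 h2 k1 k2 ->
  [\/ h1 + h2 + (k1 + k2) = 2 * (m + a) /\
        ~ (h1 = m + a - 1 /\ h2 = 0 /\ k1 = m + a + 1 /\ k2 = 0),
      [/\ h1 = a, h2 = m, k1 = a + 1 & k2 = m],
      [/\ h1 = m + a, h2 = 0, k1 = m + a & k2 = 1] |
      [/\ h1 = m + a, h2 = 0, k1 = m + a + 1 & k2 = 0]].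
Proof.
case/or4P => [/eqP[-> -> -> ->] | /eqP[-> -> -> ->] | /eqP[-> -> -> ->] | /andP[ne /eqP w]];
  [exact: Or42 | exact: Or43 | exact: Or44 | apply: Or41].
by split=> // -[e1 [e2 [e3 e4]]]; move: ne; rewrite e1 e2 e3 e4 eqxx.
Qed.

Lemma mgs_coords_light m a h1 h2 k1 k2 : mgs_coords m a h1 h2 k1 k2 ->
  h1 + h2 + (k1 + k2) <= 2 * (m + a) \/
  h1 + h2 + (k1 + k2) = (2 * (m + a)).+1 /\ k1 + k2 = (h1 + h2).+1.
Proof. by case/mgs_coordsP => [[-> _] | [-> -> -> ->] | [-> -> -> ->] | [-> -> -> ->]]; lia. Qed.

Lemma mgs_coords_restrict m a x1 x2 y1 y2 v1 v2 h1 h2 k1 k2 : 2 <= m ->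
  mgs_coords m a x1 x2 y1 y2 -> x1 + x2 + (y1 + y2) = 2 * (m + a) ->
  mgs_coords m a v1 v2 y1 y2 -> v1 + v2 = (x1 + x2).+1 ->
  mgs_coords m a h1 h2 k1 k2 -> h1 <= k1 -> h2 <= k2 -> k1 <= m + 2 * a -> k2 <= m ->
  v1 <= k1 -> v2 <= k2 -> minn h1 v1 = x1 -> minn h2 v2 = x2 ->
  [/\ h1 = x1, h2 = x2, k1 = y1 & k2 = y2].
Proof.
move=> m_ge2 Sx wx Sv vx Sh hk1 hk2 k1n k2m vk1 vk2 hv1 hv2.
case/mgs_coordsP: Sv => [[wv _] | [? ? ? ?] | [? ? ? ?] | [? ? ? ?]]; first by lia.
all: subst v1 v2 y1 y2.
all: case/mgs_coordsP: Sx => [[_ nx] | [? ? ? ?] | [? ? ? ?] | [? ? ? ?]]; try lia.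
all: case/mgs_coordsP: Sh => [[wh nh] | [? ? ? ?] | [? ? ? ?] | [? ? ? ?]]; split; lia.
Qed.

Lemma mgs_coords_heavy m a h1 h2 k1 k2 : mgs_coords m a h1 h2 k1 k2 ->
  2 * (m + a) <= h1 + h2 + (k1 + k2).
Proof. by case/mgs_coordsP => [[-> _] | [-> -> -> ->] | [-> -> -> ->] | [-> -> -> ->]]; lia. Qed.

Lemma mgs_coords0 m a h1 h2 k1 k2 : a = 0 -> k1 <= m -> mgs_coords m a h1 h2 k1 k2 =
  [|| (h1, h2, k1, k2) == (a, m, a + 1, m), (h1, h2, k1, k2) == (m + a, 0, m + a, 1) |
      h1 + h2 + (k1 + k2) == 2 * (m + a)].
Proof.
move=> -> k1m; rewrite /mgs_coords !xpair_eqE (_ : (k1 == m + 0 + 1) = false) ?andbF //.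
by apply/negbTE; rewrite neq_ltn addn0 addn1 ltnS k1m.
Qed.

Section CyclicCoordinates.
Variables (gT : finGroupType) (G : {group gT}) (p q n m : nat).
Hypotheses (p_pr : prime p) (q_pr : prime q) (neq_pq : p != q).
Hypotheses (cycG : cyclic G) (oG : #|G| = p ^ n * q ^ m).
Implicit Types H K : {group gT}.

Local Notation cp H := (logn p #|H|).
Local Notation cq H := (logn q #|H|).

Definition rank_pq (H : {set gT}) := cp H + cq H.

Let coprime_pq : coprime p q.
Proof. by rewrite prime_coprime // dvdn_prime2. Qed.

Lemma logn_p_pq a b : logn p (p ^ a * q ^ b) = a.
Proof. by rewrite mulnC logn_Gauss ?pfactorK ?coprimeXr. Qed.

Lemma logn_q_pq a b : logn q (p ^ a * q ^ b) = b.
Proof. by rewrite logn_Gauss ?pfactorK // coprimeXr // coprime_sym. Qed.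

Lemma card_subgroup_pq H : H \subset G ->
  [/\ #|H| = p ^ cp H * q ^ cq H, cp H <= n & cq H <= m].
Proof.
move=> sHG; have dvdH : #|H| %| p ^ n * q ^ m by rewrite -oG cardSg.
have [k p'k Hk] := pfactor_coprime p_pr (cardG_gt0 H).
have /(dvdn_pfactor _ _ q_pr)[b le_bm kb] : k %| q ^ m.
  have k_p'n : coprime k (p ^ n) by rewrite coprime_sym coprimeXl.
  by rewrite -(Gauss_dvdr _ k_p'n) (dvdn_trans _ dvdH) // Hk dvdn_mulr.
have oH : #|H| = p ^ cp H * q ^ b by rewrite {1}Hk kb mulnC.
have cqH := logn_q_pq (cp H) b; rewrite -oH in cqH.
rewrite cqH; split=> //; rewrite -[leqRHS](logn_p_pq n m) dvdn_leq_log //.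
by rewrite muln_gt0 !expn_gt0 !prime_gt0.
Qed.

Lemma subset_pq H K : H \subset G -> K \subset G ->
  (H \subset K) = (cp H <= cp K) && (cq H <= cq K).
Proof.
move=> sHG sKG; rewrite -(cardSg_cyclic cycG sHG sKG).
have [oH _ _] := card_subgroup_pq sHG; have [oK _ _] := card_subgroup_pq sKG.
apply/idP/andP => [dvdHK | [le_p le_q]].
  by split; apply: dvdn_leq_log.
by rewrite oH oK dvdn_mul // dvdn_exp2l.
Qed.

Lemma eq_pq H K : H \subset G -> K \subset G -> cp H = cp K -> cq H = cq K -> H = K.
Proof.
move=> sHG sKG eq_p eq_q; apply/eqP; rewrite eq_sym -val_eqE /=.
by rewrite eqEsubset (subset_pq sKG sHG) (subset_pq sHG sKG) eq_p eq_q !leqnn.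
Qed.

Lemma exists_subgroup_pq a b : a <= n -> b <= m ->
  exists2 H : {group gT}, H \subset G & cp H = a /\ cq H = b.
Proof.
move=> le_an le_bm; case/cyclicP: cycG => g defG.
have dvd_ab : p ^ a * q ^ b %| #[g]%g.
  by rewrite orderE -defG oG dvdn_mul // dvdn_exp2l.
have /setP/(_ <[g ^+ (#[g]%g %/ (p ^ a * q ^ b))]>%G) := cycle_sub_group dvd_ab.
rewrite !inE eqxx => /andP[sHg /eqP oH].
by exists <[g ^+ (#[g]%g %/ (p ^ a * q ^ b))]>%G; rewrite ?defG // oH logn_p_pq logn_q_pq.
Qed.

Lemma meet_pq H K : H \subset G -> K \subset G ->
  cp (H :&: K)%G = minn (cp H) (cp K) /\ cq (H :&: K)%G = minn (cq H) (cq K).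
Proof.
move=> sHG sKG; have sHKG : (H :&: K)%G \subset G by rewrite subIset ?sHG.
have [_ le_pH le_qH] := card_subgroup_pq sHG.
have [D sDG [Dp Dq]] := exists_subgroup_pq (leq_trans (geq_minl (cp H) (cp K)) le_pH)
                                           (leq_trans (geq_minl (cq H) (cq K)) le_qH).
have : D \subset H :&: K.
  by rewrite subsetI (subset_pq sDG sHG) (subset_pq sDG sKG) Dp Dq !geq_minl !geq_minr.
rewrite (subset_pq sDG sHKG) Dp Dq => /andP[ge_p ge_q].
have /andP[le_pIH le_qIH] : (cp (H :&: K)%G <= cp H) && (cq (H :&: K)%G <= cq H).
  by rewrite -(subset_pq sHKG sHG) subsetIl.
have /andP[le_pIK le_qIK] : (cp (H :&: K)%G <= cp K) && (cq (H :&: K)%G <= cq K).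
  by rewrite -(subset_pq sHKG sKG) subsetIr.
by split; apply/eqP; rewrite eqn_leq leq_min ?le_pIH ?le_qIH ?le_pIK ?le_qIK.
Qed.

Lemma rank_pq_lt H K : H \subset K -> K \subset G -> H != K -> rank_pq H < rank_pq K.
Proof.
move=> sHK sKG nHK; have sHG := subset_trans sHK sKG.
move: (sHK); rewrite (subset_pq sHG sKG) => /andP[le_p le_q].
rewrite /rank_pq ltn_neqAle leq_add // andbT.
apply: contra nHK => /eqP eq_sum.
have eq_p : cp H = cp K.
  by apply/eqP; rewrite eqn_leq le_p -(leq_add2r (cq H)) eq_sum leq_add2l.
have /eqP : cq H == cq K by rewrite -(eqn_add2l (cp H)) {2}eq_p eq_sum.
by move=> /(eq_pq sHG sKG eq_p) ->.
Qed.

Lemma maximal_eq_rank_pq H K : H \subset K -> K \subset G ->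
  rank_pq K = (rank_pq H).+1 -> maximal_eq H K.
Proof.
move=> sHK sKG rHK; apply/maximal_eqP; split=> // Y sHY sYK.
have sYG := subset_trans sYK sKG.
case: (eqVneq Y K) => [-> | nYK]; [by right | left].
case: (eqVneq H Y) => [-> // | nHY].
have := rank_pq_lt sYK sKG nYK; rewrite rHK ltnS leqNgt.
by rewrite (rank_pq_lt sHY sYG nHY).
Qed.

Lemma eq_arrow_pq (A B : arrow_t gT) : is_arrow G A -> is_arrow G B ->
  (A == B) = ((cp A.1, cq A.1, cp A.2, cq A.2) == (cp B.1, cq B.1, cp B.2, cq B.2)).
Proof.
case: A B => [H K] [H' K'] /andP[/= sHK sKG] /andP[/= sHK' sK'G].
apply/eqP/eqP => [[-> ->] // | [eq_pH eq_qH eq_pK eq_qK]].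
have sHG := subset_trans sHK sKG; have sH'G := subset_trans sHK' sK'G.
by rewrite (eq_pq sHG sH'G eq_pH eq_qH) (eq_pq sKG sK'G eq_pK eq_qK).
Qed.

Lemma eq_nonid_arrow_pq A B : B \in nonid_arrows G -> (A == B) =
  (A \in nonid_arrows G) && ((cp A.1, cq A.1, cp A.2, cq A.2) == (cp B.1, cq B.1, cp B.2, cq B.2)).
Proof.
move=> BN; case: (boolP (A \in nonid_arrows G)) => AN; last by apply: contraNF AN => /eqP ->.
exact: eq_arrow_pq (nonid_arrow AN) (nonid_arrow BN).
Qed.

Lemma exists_arrow_pq h1 h2 k1 k2 :
  h1 <= k1 -> h2 <= k2 -> k1 <= n -> k2 <= m -> (h1 != k1) || (h2 != k2) ->
  exists2 A, A \in nonid_arrows G & [/\ cp A.1 = h1, cq A.1 = h2, cp A.2 = k1 & cq A.2 = k2].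
Proof.
move=> hk1 hk2 k1n k2m nhk.
have [K sKG [Kp Kq]] := exists_subgroup_pq k1n k2m.
have [H sHG [Hp Hq]] := exists_subgroup_pq (leq_trans hk1 k1n) (leq_trans hk2 k2m).
exists (H, K) => //; rewrite inE /is_arrow /= (subset_pq sHG sKG) Hp Hq Kp Kq hk1 hk2 sKG /=.
by apply: contraTneq nhk => eHK; rewrite -Hp -Hq eHK Kp Kq !eqxx.
Qed.

Section MinimalGeneratingSet.
Variable a : nat.
Hypotheses (m_ge2 : 2 <= m) (n_def : n = m + 2 * a).

Definition mgs : {set arrow_t gT} :=
  [set A in nonid_arrows G | mgs_coords m a (cp A.1) (cq A.1) (cp A.2) (cq A.2)].

Local Notation R := (Rmid2 G p q (n + m)).

Lemma mgs_sub_nonid : mgs \subset nonid_arrows G.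
Proof. by apply/subsetP => A; rewrite inE => /andP[]. Qed.

Lemma mgs_arrow A : A \in mgs -> is_arrow G A.
Proof. by move/(subsetP mgs_sub_nonid)/nonid_arrow. Qed.

Lemma mgs_restricts_to (X V Y H K : {group gT}) :
    (X, Y) \in mgs -> rank_pq X + rank_pq Y = 2 * (m + a) ->
    (V, Y) \in mgs -> X \subset V -> rank_pq V = (rank_pq X).+1 ->
  (H, K) \in mgs -> restricts_to X V (H, K) -> (H, K) = (X, Y).
Proof.
rewrite !inE /is_arrow /= => /andP[/andP[/andP[sXY sYG] _] mgsXY] wXY.
move=> /andP[/andP[/andP[sVY _] _] mgsVY] sXV rVX.
move=> /andP[/andP[/andP[sHK sKG] _] mgsHK] /andP[/= sVK /eqP HVX].
have sVG := subset_trans sVY sYG; have sHG := subset_trans sHK sKG.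
have sXG := subset_trans sXV sVG.
have [_ k1n k2m] := card_subgroup_pq sKG; rewrite n_def in k1n.
have [minp minq] := meet_pq sHG sVG; rewrite /= HVX in minp minq.
move: (sHK) (sVK); rewrite (subset_pq sHG sKG) (subset_pq sVG sKG).
move=> /andP[hk1 hk2] /andP[vk1 vk2].
have [eHp eHq eKp eKq] := mgs_coords_restrict m_ge2 mgsXY wXY mgsVY rVX mgsHK
  hk1 hk2 k1n k2m vk1 vk2 (esym minp) (esym minq).
by rewrite (eq_pq sHG sXG eHp eHq) (eq_pq sKG sYG eKp eKq).
Qed.

Lemma mgs_light A : A \in mgs ->
  rank_pq A.1 + rank_pq A.2 <= 2 * (m + a) \/
  rank_pq A.1 + rank_pq A.2 = (2 * (m + a)).+1 /\ rank_pq A.2 = (rank_pq A.1).+1.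
Proof. by rewrite inE => /andP[_ /mgs_coords_light]. Qed.

Lemma mgs_minimal : minimal_gen G mgs.
Proof.
move=> [X Y] mgsXY; have /andP[/= sXY sYG] := mgs_arrow mgsXY.
have nXY : X != Y by move: mgsXY; rewrite !inE => /andP[/andP[_ ->]].
have abG := cyclic_abelian cycG.
have wXY : 2 * (m + a) <= rank_pq X + rank_pq Y.
  by move: mgsXY; rewrite inE => /andP[_ /mgs_coords_heavy].
set S0 := mgs :\ (X, Y).
have S0_arrow A : A \in S0 -> is_arrow G A by move/setD1P=> [_ /mgs_arrow].
case: (boolP (cover_factor rank_pq S0 (X, Y))) => [/existsP[V] | no_factor].
  case/and3P=> /= sXV /eqP rVX S0VY; have /andP[/= sVY _] := S0_arrow _ S0VY.
  have maxXV := maximal_eq_rank_pq sXV (subset_trans sVY sYG) rVX.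
  apply: (gen_ts_setD1_neq mgsXY (avoiding_ts_is_ts abG maxXV)).
    apply/subsetP => -[H K] S0HK; rewrite inE S0_arrow //=.
    have [nHK mgsHK] := setD1P S0HK; have [_ mgsVY] := setD1P S0VY.
    have wVY : rank_pq V + rank_pq Y <= (2 * (m + a)).+1.
      by case: (mgs_light mgsVY) => [/leqW | [-> _]].
    have eq_wXY : rank_pq X + rank_pq Y = 2 * (m + a).
      by apply/eqP; rewrite eqn_leq wXY andbT -ltnS -addSn -rVX.
    apply/orP; right; apply/negP => HKr; case/eqP: nHK.
    exact: mgs_restricts_to mgsXY eq_wXY mgsVY sXV rVX mgsHK HKr.
  by rewrite inE /is_arrow /= sXY sYG (negbTE nXY) /restricts_to /= sVY (setIidPl sXV) eqxx.
apply: (gen_ts_setD1_neq mgsXY (trunc_ts_is_ts (W := 2 * (m + a)) (S0 := S0) rank_pq_lt _ abG)).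
- by move=> A /setD1P[_ /mgs_light].
- exact: S0_sub_trunc_ts.
rewrite inE /is_arrow /= sXY sYG (negbTE nXY) /weight /= ltnNge wXY setD11.
by rewrite (negbTE no_factor) andbF.
Qed.

Lemma mem_Rmid A : (A \in R) =
  (A \in nonid_arrows G) && (rank_pq A.1 + rank_pq A.2 == 2 * (m + a)).
Proof.
have -> : n + m = 2 * (m + a) by rewrite n_def addnAC addnn -mul2n -mulnDr.
by rewrite inE /rank_pq !addnA.
Qed.

Lemma card_mgs : #|mgs| = #|R| + 2.
Proof.
have [t1 t1N [t11 t12 t13 t14]] := @exists_arrow_pq a m (a + 1) m
  ltac:(lia) ltac:(lia) ltac:(lia) ltac:(lia) ltac:(lia).
have [t2 t2N [t21 t22 t23 t24]] := @exists_arrow_pq (m + a) 0 (m + a) 1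
  ltac:(lia) ltac:(lia) ltac:(lia) ltac:(lia) ltac:(lia).
case: (posnP a) => [a0 | a_gt0].
  have -> : mgs = t1 |: (t2 |: R).
    apply/setP => A; rewrite !in_setU1 (eq_nonid_arrow_pq _ t1N) (eq_nonid_arrow_pq _ t2N).
    rewrite mem_Rmid inE; case: (boolP (A \in nonid_arrows G)) => //= AN.
    have /andP[_ sA2G] := nonid_arrow AN; have [_ k1n _] := card_subgroup_pq sA2G.
    rewrite t11 t12 t13 t14 t21 t22 t23 t24.
    by rewrite mgs_coords0 // (leq_trans k1n) // n_def a0 muln0 addn0.
  rewrite !cardsU1 in_setU1 (eq_nonid_arrow_pq _ t2N) !mem_Rmid t1N t2N /rank_pq.
  by rewrite t11 t12 t13 t14 t21 t22 t23 t24 !xpair_eqE /=; lia.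
have [t3 t3N [t31 t32 t33 t34]] := @exists_arrow_pq (m + a) 0 (m + a + 1) 0
  ltac:(lia) ltac:(lia) ltac:(lia) ltac:(lia) ltac:(lia).
have [r0 r0N [r01 r02 r03 r04]] := @exists_arrow_pq (m + a - 1) 0 (m + a + 1) 0
  ltac:(lia) ltac:(lia) ltac:(lia) ltac:(lia) ltac:(lia).
have -> : mgs = t1 |: (t2 |: (t3 |: (R :\ r0))).
  apply/setP => A; rewrite !in_setU1 in_setD1 (eq_nonid_arrow_pq _ t1N) (eq_nonid_arrow_pq _ t2N).
  rewrite (eq_nonid_arrow_pq _ t3N) (eq_nonid_arrow_pq _ r0N) mem_Rmid inE.
  case: (A \in nonid_arrows G) => //=.
  by rewrite t11 t12 t13 t14 t21 t22 t23 t24 t31 t32 t33 t34 r01 r02 r03 r04.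
rewrite !cardsU1 !in_setU1 !in_setD1 (cardsD1 r0 R) !(eq_nonid_arrow_pq _ t2N).
rewrite !(eq_nonid_arrow_pq _ t3N) !(eq_nonid_arrow_pq _ r0N) !mem_Rmid t1N t2N t3N r0N /rank_pq.
by rewrite t11 t12 t13 t14 t21 t22 t23 t24 t31 t32 t33 t34 r01 r02 r03 r04 !xpair_eqE /=; lia.
Qed.

End MinimalGeneratingSet.
End CyclicCoordinates.

Theorem lemma7p4 (gT : finGroupType) (G : {group gT}) (p q n m : nat) :
  prime p -> prime q -> p != q -> 2 <= m -> m <= n -> ~~ odd (n + m) ->
  cyclic G -> #|G| = p ^ n * q ^ m ->
  exists S : {set arrow_t gT},
    [/\ S \subset nonid_arrows G, minimal_gen G S &
        #|S| = #|Rmid2 G p q (n + m)| + 2].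
Proof.
move=> p_pr q_pr neq_pq m_ge2 le_mn even_nm cycG oG.
have n_def : n = m + 2 * (n - m)./2.
  by rewrite mul2n halfK oddB // -oddD (negbTE even_nm) subn0 subnKC.
exists (mgs G p q m (n - m)./2); split.
- exact: mgs_sub_nonid.
- exact (mgs_minimal p_pr q_pr neq_pq cycG oG m_ge2 n_def).
- exact (card_mgs p_pr q_pr neq_pq cycG oG m_ge2 n_def).
Qed.
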